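(* Let $\mathbb{K}$ be any field and $G=UU_n(\mathbb{K})$ the group of $n\times n$ upper triangular unipotent matrices over $\mathbb{K}$. If $x=(x_{ij})\in G$ satisfies $\prod_{i=1}^{n-1}x_{i,i+1}\ne 0$, then the centralizer $C_G(x)$ is abelian. *)

From HB Require Import structures.
From mathcomp Require Import all_boot all_order all_algebra.
Set Implicit Arguments. Unset Strict Implicit. Unset Printing Implicit Defensive.
Import GRing.Theory.
Local Open Scope ring_scope.

Definition unitriangular (K : fieldType) (n : nat) (A : 'M[K]_n) : Prop :=
  (forall i j : 'I_n, (j < i)%N -> A i j = 0) /\ (forall i : 'I_n, A i i = 1).

Definition in_centralizer_UU (K : fieldType) (n : nat) (x g : 'M[K]_n) : Prop :=
  unitriangular g /\ g *m x = x *m g.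

(* \prod_{i=1}^{n-1} x_{i,i+1}, written with 0-based ordinal indices. *)
Definition superdiag_prod (K : fieldType) (n : nat) (x : 'M[K]_n) : K :=
  \prod_(i : 'I_n) \prod_(j : 'I_n | nat_of_ord j == i.+1) x i j.

(* With N := x - 1, the hypotheses say that N is strictly upper triangular
   with nonzero superdiagonal, i.e. a regular nilpotent matrix: the rows
   e_0 N^k (k < n) form a triangular basis with nonzero diagonal.  A matrix A
   commuting with N is determined by e_0 A, since e_0 N^k A = (e_0 A) N^k;
   writing e_0 A = sum_k c_k e_0 N^k shows A = sum_k c_k N^k.  So every matrix
   commuting with x is a polynomial in x, and any two such matrices commute. *)

From HB Require Import structures.
From mathcomp Require Import all_boot all_order all_algebra.
Set Implicit Arguments. Unset Strict Implicit. Unset Printing Implicit Defensive.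
Import GRing.Theory.
Local Open Scope ring_scope.

Lemma horner_mx_poly (R : comNzRingType) (n k : nat) (A : 'M[R]_n.+1)
    (c : nat -> R) :
  horner_mx A (\poly_(i < k) c i) = \sum_(i < k) c i *: A ^+ i.
Proof.
rewrite poly_def rmorph_sum; apply: eq_bigr => i _.
by rewrite -mul_polyC rmorphM /= horner_mx_C rmorphXn /= horner_mx_X
  -mulmxE mul_scalar_mx.
Qed.

Section RegularNilpotent.

Variables (K : fieldType) (n : nat) (N : 'M[K]_n.+1).
Hypothesis N_strict : forall i j : 'I_n.+1, (j <= i)%N -> N i j = 0.
Hypothesis N_superdiag : forall i j : 'I_n.+1, j = i.+1 :> nat -> N i j != 0.

Lemma expmx_row0_lt (k : nat) (j : 'I_n.+1) : (j < k)%N -> (N ^+ k) 0 j = 0.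
Proof.
elim: k j => // k IHk j ltjk; rewrite exprSr -mulmxE mxE big1 // => l _.
have [ltlk | lekl] := ltnP l k; first by rewrite IHk // mul0r.
by rewrite N_strict ?mulr0 // (leq_trans _ lekl) // -ltnS.
Qed.

Lemma expmx_row0_eq (k : nat) (j : 'I_n.+1) : j = k :> nat -> (N ^+ k) 0 j != 0.
Proof.
elim: k j => [|k IHk] j jk.
  by rewrite expr0 mxE (_ : j = 0) ?eqxx ?oner_neq0 //; apply: val_inj.
have ltkn : (k < n.+1)%N by rewrite (ltn_trans _ (ltn_ord j)) ?jk.
rewrite exprSr -mulmxE mxE (bigD1 (Ordinal ltkn)) //= big1 ?addr0.
  by apply: mulf_neq0; [apply: IHk | apply: N_superdiag].
move=> l /eqP neqlk; have [ltlk | lekl] := ltnP l k.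
  by rewrite expmx_row0_lt // mul0r.
have ltkl : (k < l)%N.
  rewrite ltn_neqAle lekl andbT; apply/eqP => eqkl; apply: neqlk.
  by apply/val_inj; rewrite /= eqkl.
by rewrite N_strict ?mulr0 // jk.
Qed.

Definition krylov_mx : 'M[K]_n.+1 := \matrix_(k, j) (N ^+ k) 0 j.

Lemma row_krylov_mx (k : 'I_n.+1) : row k krylov_mx = row 0 (N ^+ k).
Proof. by apply/rowP => j; rewrite !mxE. Qed.

Lemma krylov_mx_unit : krylov_mx \in unitmx.
Proof.
rewrite unitmxE unitfE -det_tr det_trig.
  by rewrite prodf_seq_neq0; apply/allP => i _; rewrite !mxE expmx_row0_eq.
by apply/is_trig_mxP => i j ltij; rewrite !mxE expmx_row0_lt.
Qed.

Lemma commmx_eq_row0 (A B : 'M[K]_n.+1) :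
    A *m N = N *m A -> B *m N = N *m B -> row 0 A = row 0 B -> A = B.
Proof.
move=> cAN cBN eqAB0.
have cNk (C : 'M[K]_n.+1) k : C *m N = N *m C -> C *m N ^+ k = N ^+ k *m C.
  by move=> cCN; rewrite mulmxE; apply/commrX; rewrite /GRing.comm -!mulmxE.
rewrite -(mulKmx krylov_mx_unit A) -(mulKmx krylov_mx_unit B); congr (_ *m _).
apply/row_matrixP => k.
by rewrite !row_mul row_krylov_mx -!row_mul -!cNk // !row_mul eqAB0.
Qed.

Lemma commmx_horner (A : 'M[K]_n.+1) :
  A *m N = N *m A -> exists p : {poly K}, A = horner_mx N p.
Proof.
move=> cAN; have [w row0A] : exists w, row 0 A = w *m krylov_mx.
  by apply/submxP/submx_full; rewrite row_full_unit krylov_mx_unit.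
exists (\poly_(k < n.+1) w 0 (inord k)); apply: commmx_eq_row0 => //.
  by apply/comm_horner_mx.
rewrite row0A horner_mx_poly mulmx_sum_row raddf_sum; apply: eq_bigr => k _.
by rewrite inord_val; apply/rowP => j; rewrite !mxE.
Qed.

Lemma commmx_comm (A B : 'M[K]_n.+1) :
  A *m N = N *m A -> B *m N = N *m B -> A *m B = B *m A.
Proof.
move=> /commmx_horner[p ->] /commmx_horner[q ->].
by rewrite mulmxE comm_horner_mx2.
Qed.

End RegularNilpotent.

Lemma unitriangular_subr1_strict (K : fieldType) (n : nat) (x : 'M[K]_n) :
  unitriangular x -> forall i j : 'I_n, (j <= i)%N -> (x - 1) i j = 0.
Proof.
move=> [xlow xdiag] i j; rewrite leq_eqVlt => /predU1P[/val_inj -> | ltji].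
  by rewrite !mxE xdiag eqxx subrr.
by rewrite !mxE xlow // eq_sym -(inj_eq val_inj) /= ltn_eqF // subr0.
Qed.

Lemma superdiag_prod_neq0 (K : fieldType) (n : nat) (x : 'M[K]_n) :
  superdiag_prod x != 0 -> forall i j : 'I_n, j = i.+1 :> nat -> x i j != 0.
Proof.
rewrite /superdiag_prod prodf_seq_neq0 => /allP prod_neq0 i j ji.
move: (prod_neq0 i (mem_index_enum _)); rewrite prodf_seq_neq0.
by move=> /allP/(_ j (mem_index_enum _)); rewrite ji eqxx.
Qed.

Lemma commmx_subr1 (R : pzRingType) (n : nat) (A x : 'M[R]_n) :
  A *m x = x *m A -> A *m (x - 1) = (x - 1) *m A.
Proof. by move=> cAx; rewrite mulmxBr mulmxBl cAx mulmx1 mul1mx. Qed.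

Theorem theorem11p1 (K : fieldType) (n : nat) (x : 'M[K]_n) :
  unitriangular x ->
  superdiag_prod x != 0 ->
  forall g h : 'M[K]_n,
    in_centralizer_UU x g -> in_centralizer_UU x h ->
    g *m h = h *m g.
Proof.
case: n x => [|n] x xU xprod g h [_ cgx] [_ chx].
  by apply/matrixP => -[].
apply: (commmx_comm (N := x - 1)); rewrite ?commmx_subr1 //.
  exact: unitriangular_subr1_strict.
move=> i j ji; rewrite !mxE -(inj_eq val_inj) /= ji ltn_eqF // subr0.
exact: superdiag_prod_neq0.
Qed.
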